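(* Let $\bar A\in\mathbb{R}^{n\times n}$ be Hurwitz, $\bar Q=\bar Q^T\succeq0$, and consider $\dot{\mathbf{x}}=\bar A\mathbf{x}$, $\mathbf{x}(t_0)=\mathbf{x}_0$, with cost $J=\int_{t_0}^\infty\mathbf{x}^T\bar Q\mathbf{x}\,dt$. For $Y\in\mathbb{R}^{n\times n}$ (Krotov function $q=\mathbf{x}^TY\mathbf{x}$) define $J_{eq}(Y)=\mathbf{x}_0^TY\mathbf{x}_0+\int_{t_0}^\infty\mathbf{x}(t)^T(\bar A^TY+Y\bar A+\bar Q)\mathbf{x}(t)\,dt$, where $\mathbf{x}(t)$ is the solution of the system. Let $Y^*$ be the solution of $\bar A^TY+Y\bar A+\bar Q=0$ and $J^*=\mathbf{x}_0^TY^*\mathbf{x}_0$. Then (1) for every symmetric $Y\succeq0$, $J_{eq}(Y)\ge J^*$; (2) if $t_0=0$, then $J_{eq}(Y)=J^*$ for every matrix $Y$.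
   Context: $J_{eq}(Y)$ is the Krotov-equivalent form of the cost for $q(\mathbf{x})=\mathbf{x}^TY\mathbf{x}$: $q(\mathbf{x}_0)+\int s\,dt$ with $s=\frac{\partial q}{\partial\mathbf{x}}\bar A\mathbf{x}+\mathbf{x}^T\bar Q\mathbf{x}$ (the terminal term vanishes since $\mathbf{x}(t)\to0$). *)

From HB Require Import structures.
From mathcomp Require Import all_boot all_order all_algebra.
From mathcomp Require Import all_classical all_reals.
From mathcomp Require Import topology normedtype derive measure lebesgue_measure lebesgue_integral.
From mathcomp Require Import complex.
Set Implicit Arguments. Unset Strict Implicit. Unset Printing Implicit Defensive.
Import Order.TTheory GRing.Theory Num.Theory.
Import numFieldNormedType.Exports.
Local Open Scope ring_scope.

Definition qform (R : realType) (n : nat) (M : 'M[R]_n) (v : 'cV[R]_n) : R :=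
  (v^T *m M *m v) 0 0.

Definition psd (R : realType) (n : nat) (M : 'M[R]_n) : Prop :=
  M^T = M /\ forall v : 'cV[R]_n, 0 <= qform M v.

Definition hurwitz (R : realType) (n : nat) (A : 'M[R]_n) : Prop :=
  forall z : R[i], root (map_poly (real_complex R) (char_poly A)) z -> Re z < 0.

Definition J_eq (R : realType) (n : nat) (A Q Y : 'M[R]_n) (x : R -> 'cV[R]_n)
  (t0 : R) : \bar R :=
  ((qform Y (x t0))%:E +
   \int[lebesgue_measure]_(t in `[t0, +oo[%classic)
      (qform (A^T *m Y + Y *m A + Q) (x t))%:E)%E.

From HB Require Import structures.
From mathcomp Require Import all_boot all_order all_algebra.
From mathcomp Require Import all_classical all_reals.
From mathcomp Require Import topology normedtype derive measure lebesgue_measure lebesgue_integral.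
From mathcomp Require Import complex.
From mathcomp Require Import sequences exp realfun ftc measurable_realfun.
From mathcomp Require Import ring lra.
Import Order.TTheory GRing.Theory Num.Theory.
Import numFieldNormedType.Exports.
Set Implicit Arguments. Unset Strict Implicit. Unset Printing Implicit Defensive.
Local Open Scope ring_scope.

(* Along [x' = A x], [d/dt (x^T M x) = x^T (A^T M + M A) x].  With [M = Y - Y*] the
   Lyapunov equation makes the integrand of [J_eq Y] the derivative of
   [g t = x(t)^T M x(t)]; once [x] decays exponentially, the integral is
   [- g t0], whence [J_eq Y = x0^T Y* x0].
   Exponential decay is proved without the matrix exponential.  For a complex matrix
   [U] and [z = a + i b] with [a < 0],
   [d/dt |U x|^2 <= a |U x|^2 - |U (A - z) x|^2 / a],
   so decay of [|U (A - z) x|^2] implies decay of [|U x|^2].  Peeling off the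
   eigenvalues of the Hurwitz matrix [A] one at a time ends, by Cayley-Hamilton, at
   [U = 0]. *)

Section BilinearForm.
Variable R : comNzRingType.

Definition bform (p q : nat) (M : 'M[R]_(p, q)) (u : 'cV[R]_p) (w : 'cV[R]_q) : R :=
  (u^T *m M *m w) 0 0.

Variables (p q : nat).
Implicit Types (M N : 'M[R]_(p, q)) (u : 'cV[R]_p) (w : 'cV[R]_q).

Lemma bformE M u w : bform M u w = \sum_(i < p) \sum_(j < q) u i 0 * M i j * w j 0.
Proof.
rewrite /bform mxE exchange_big; apply: eq_bigr => i _.
by rewrite mxE big_distrl; apply: eq_bigr => j _; rewrite !mxE.
Qed.

Lemma bformD M N u w : bform (M + N) u w = bform M u w + bform N u w.
Proof. by rewrite /bform mulmxDr mulmxDl mxE. Qed.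

Lemma bformN M u w : bform (- M) u w = - bform M u w.
Proof. by rewrite /bform mulmxN mulNmx mxE. Qed.

Lemma bform_trmxl r (P : 'M[R]_(r, p)) (M : 'M[R]_(r, q)) u w :
  bform (P^T *m M) u w = bform M (P *m u) w.
Proof. by rewrite /bform trmx_mul !mulmxA. Qed.

Lemma bform_mulmxr r (P : 'M[R]_(q, r)) M u (w : 'cV[R]_r) :
  bform (M *m P) u w = bform M u (P *m w).
Proof. by rewrite /bform !mulmxA. Qed.

End BilinearForm.

Lemma bform_gram (R : comNzRingType) (p r : nat) (P : 'M[R]_(r, p)) (u v : 'cV[R]_p) :
  bform (P^T *m P) u v = \sum_(i < r) (P *m u) i 0 * (P *m v) i 0.
Proof. by rewrite bform_trmxl /bform -mulmxA mxE; apply: eq_bigr => i _; rewrite !mxE. Qed.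

Section QuadraticForm.
Variables (R : realType) (n : nat).
Implicit Types (M : 'M[R]_n) (v : 'cV[R]_n).

Lemma qformE M v : qform M v = bform M v v. Proof. by []. Qed.

Lemma qform_lyapunov (A M : 'M[R]_n) v :
  qform (A^T *m M + M *m A) v = bform M (A *m v) v + bform M v (A *m v).
Proof. by rewrite qformE bformD bform_trmxl bform_mulmxr. Qed.

Lemma sqr_coord_le_sum v i : v i 0 ^+ 2 <= \sum_(k < n) v k 0 ^+ 2.
Proof. by rewrite (bigD1 i) //= lerDl sumr_ge0 // => k _; rewrite sqr_ge0. Qed.

Lemma qform_abs_le M v :
  `|qform M v| <= (\sum_(i < n) \sum_(j < n) `|M i j|) * \sum_(k < n) v k 0 ^+ 2.
Proof.
rewrite qformE bformE mulr_suml (le_trans (ler_norm_sum _ _ _)) // ler_sum // => i _.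
rewrite mulr_suml (le_trans (ler_norm_sum _ _ _)) // ler_sum // => j _.
have vij : `|v i 0| * `|v j 0| <= \sum_(k < n) v k 0 ^+ 2.
  have := sqr_coord_le_sum v i; have := sqr_coord_le_sum v j.
  rewrite -[v i 0 ^+ 2]real_normK ?num_real // -[v j 0 ^+ 2]real_normK ?num_real //.
  have := sqr_ge0 (`|v i 0| - `|v j 0|); nra.
by rewrite !normrM mulrAC mulrC ler_wpM2l.
Qed.

End QuadraticForm.

Section RealDerivatives.
Variable R : realType.

Lemma is_derive_mx_entry (m p : nat) (X : R -> 'M[R]_(m, p)) (t : R) dX i j :
  is_derive t 1 X dX -> is_derive t 1 (fun s => X s i j) (dX i j).
Proof.
move=> hX; have dXt : derivable X t 1 by exact: ex_derive.
apply: DeriveDef; first exact: (derivable_mxP X t 1).1 dXt i j.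
by move/matrixP: (derive_mx dXt) => /(_ i j); rewrite derive_val [RHS]mxE => ->.
Qed.

Lemma is_derive_qform (n : nat) (M : 'M[R]_n) (x : R -> 'cV[R]_n) (t : R) dx :
  is_derive t 1 x dx ->
  is_derive t 1 (fun s => qform M (x s)) (bform M dx (x t) + bform M (x t) dx).
Proof.
move=> hx.
have -> : (fun s => qform M (x s)) = \sum_(i < n)
    (fun s => \sum_(j < n) (M i j *: ((fun s => x s i 0) * (fun s => x s j 0))) s).
  apply/funext => s; rewrite fct_sumE qformE bformE; apply: eq_bigr => i _.
  apply: eq_bigr => j _ /=.
  by change (x s i 0 * M i j * x s j 0 = M i j * (x s i 0 * x s j 0)); ring.
apply: is_derive_eq.
  apply: is_derive_sum => i; rewrite -fct_sumE; apply: is_derive_sum => j.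
  by apply/is_deriveZ/is_deriveM; apply: is_derive_mx_entry.
rewrite !bformE -big_split /=; apply: eq_bigr => i _; rewrite -big_split /=.
by apply: eq_bigr => j _ /=; rewrite /GRing.scale /=; ring.
Qed.

Lemma is_derive_qform_flow (n : nat) (A M : 'M[R]_n) (x : R -> 'cV[R]_n) (t : R) :
  is_derive t 1 x (A *m x t) ->
  is_derive t 1 (fun s => qform M (x s)) (qform (A^T *m M + M *m A) (x t)).
Proof. by move=> hx; rewrite qform_lyapunov; exact: is_derive_qform. Qed.

Lemma is_derive_expR_affine (k t0 t : R) :
  is_derive t 1 (fun s => expR (k * (s - t0))) (k * expR (k * (t - t0))).
Proof.
have hlin : is_derive t 1 (fun s : R => k * (s - t0)) k.
  have := is_deriveZ k (is_deriveB (is_derive_id t 1) (is_derive_cst t0 t 1)).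
  by rewrite /GRing.scale /= subr0 mulr1.
by rewrite mulrC; exact: (is_derive1_comp (is_derive_expR _) hlin).
Qed.

Lemma continuous_is_derive (f df : R -> R) :
  (forall t : R, is_derive t 1 f (df t)) -> continuous f.
Proof.
move=> hf t; have := hf t => ?.
by apply/differentiable_continuous/derivable1_diffP; exact: ex_derive.
Qed.

Lemma is_derive_le0_nincr (f df : R -> R) (a b : R) :
  (forall t : R, is_derive t 1 f (df t)) -> (forall t, a <= t -> df t <= 0) ->
  a <= b -> f b <= f a.
Proof.
move=> hf hdf ab.
have [c cab fE] := MVT_segment ab (fun t _ => hf t)
  (continuous_subspaceT (continuous_is_derive hf)).
rewrite -subr_le0 fE mulr_le0_ge0 ?subr_ge0 //.
by apply: hdf; move: cab; rewrite in_itv /= => /andP[].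
Qed.

End RealDerivatives.

Section ExponentialDecay.
Variable R : realType.
Local Notation mu := (@lebesgue_measure R).
Local Open Scope classical_set_scope.

Definition exp_decay (f : R -> R) (t0 : R) : Prop := exists C c : R,
  [/\ 0 <= C, 0 < c & forall t, t0 <= t -> f t <= C * expR (- c * (t - t0))].

(* [e^(c' (t - t0)) f t + K e^(-(c - c') (t - t0))] is nonincreasing on [t0, +oo[
   for [c' = min(-a, c) / 2] and [K = k C / (c - c')]. *)
Lemma exp_decay_derive_le (f df g : R -> R) (a k t0 : R) :
  a < 0 -> 0 <= k -> (forall t : R, is_derive t 1 f (df t)) -> (forall t, 0 <= f t) ->
  (forall t, t0 <= t -> df t <= a * f t + k * g t) ->
  exp_decay g t0 -> exp_decay f t0.
Proof.
move=> a0 k0 hf f0 hdf [C [c [C0 c0 hg]]].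
pose c' := Num.min (- a) c / 2.
have c'0 : 0 < c' by rewrite divr_gt0 // lt_min oppr_gt0 a0 c0.
have c'a : c' + a <= 0.
  have : Num.min (- a) c <= - a by rewrite ge_min lexx.
  rewrite /c'; lra.
have d0 : 0 < c - c'.
  have : Num.min (- a) c <= c by rewrite ge_min lexx orbT.
  rewrite /c' in c'0 *; lra.
pose K := k * C / (c - c').
have K0 : 0 <= K by rewrite divr_ge0 ?mulr_ge0 // ltW.
pose e s := expR (c' * (s - t0)).
pose e' s := expR (- (c - c') * (s - t0)).
pose H := e * f + K \*: e'.
pose dH t := e t * (c' * f t + df t) - k * C * e' t.
have hH t : is_derive t (1 : R) H (dH t).
  have he : is_derive t 1 e (c' * e t) := is_derive_expR_affine _ _ _.
  have he' : is_derive t 1 e' (- (c - c') * e' t) := is_derive_expR_affine _ _ _.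
  have hd := is_deriveD (is_deriveM he (hf t)) (is_deriveZ K he').
  apply: is_derive_eq hd _.
  rewrite /dH /K /GRing.scale /=; field; exact: lt0r_neq0.
have dH_le0 t : t0 <= t -> dH t <= 0.
  move=> tt0; rewrite /dH subr_le0.
  have ee' : e' t = e t * expR (- c * (t - t0)).
    by rewrite /e /e' -expRD; congr expR; ring.
  have -> : k * C * e' t = e t * (k * (C * expR (- c * (t - t0)))) by rewrite ee'; ring.
  rewrite ler_pM2l ?expR_gt0 //; apply: le_trans (ler_wpM2l k0 (hg t tt0)).
  have := mulr_le0_ge0 c'a (f0 t); have := hdf t tt0; rewrite mulrDl; lra.
have Hle t : t0 <= t -> e t * f t <= f t0 + K.
  have HE s : H s = e s * f s + K * e' s by [].
  move=> tt0; have := is_derive_le0_nincr hH dH_le0 tt0; rewrite !HE.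
  have -> : e t0 * f t0 + K * e' t0 = f t0 + K.
    by rewrite /e /e' !subrr !mulr0 expR0 mul1r mulr1.
  by apply: le_trans; rewrite lerDl mulr_ge0 ?expR_ge0.
exists (f t0 + K), c'; split => [|//|t tt0]; first by rewrite addr_ge0.
rewrite -(ler_pM2l (expR_gt0 (c' * (t - t0)))) mulrCA -expRD mulNr addrN expR0 mulr1.
exact: Hle.
Qed.

Lemma exp_decay_cvg0 (u : R -> R) (t0 : R) :
  exp_decay (fun t => `|u t|) t0 -> u t @[t --> +oo] --> 0.
Proof.
move=> [C [c [C0 c0 hu]]]; apply/cvgrPdist_le => eps eps0; near=> t.
rewrite sub0r normrN; apply: le_trans (hu t _) _.
  by near: t; apply: nbhs_pinfty_ge; exact: num_real.
have ht : t0 + C / (eps * c) <= t by near: t; apply: nbhs_pinfty_ge; exact: num_real.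
have Cle : C <= (t - t0) * (eps * c) by rewrite -ler_pdivrMr ?mulr_gt0 // lerBrDl.
rewrite mulNr expRN ler_pdivrMr ?expR_gt0 //.
apply: le_trans (ler_wpM2l (ltW eps0) (expR_ge1Dx _)); nra.
Unshelve. all: end_near.
Qed.

Lemma ge0_integral_itvy_is_derive (f F : R -> R) (t0 l : R) :
  (forall t, t0 <= t -> 0 <= f t) -> continuous f ->
  (forall t : R, is_derive t 1 F (f t)) -> F t @[t --> +oo] --> l ->
  (\int[mu]_(t in `[t0, +oo[) (f t)%:E = l%:E - (F t0)%:E)%E.
Proof.
move=> f0 cf hF Fl; apply: ge0_continuous_FTC2y.
- exact: f0.
- exact: continuous_subspaceT.
- exact: Fl.
- by move=> t _; have := hF t => ?; exact: ex_derive.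
- exact/cvg_at_right_filter/(continuous_is_derive hF).
- by move=> t _; rewrite derive1E derive_val.
Qed.

Lemma continuous_ge0_integrable_itvy (f : R -> R) (t0 : R) :
  continuous f -> (forall t, t0 <= t -> 0 <= f t) ->
  (\int[mu]_(t in `[t0, +oo[) (f t)%:E < +oo)%E ->
  mu.-integrable `[t0, +oo[ (fun t => (f t)%:E).
Proof.
move=> cf f0 fy; apply/integrableP; split.
  by apply/measurable_EFinP/measurable_funTS; exact: continuous_measurable_fun.
have -> : (\int[mu]_(t in `[t0, +oo[) `|(f t)%:E|)%E = (\int[mu]_(t in `[t0, +oo[) (f t)%:E)%E.
  apply: eq_integral => t; rewrite inE /= in_itv /= andbT => tt0.
  by rewrite ger0_norm // f0.
exact: fy.
Qed.

(* The exponential majorant [h] of [|f|] splits [f] into the nonnegative functions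
   [f + h] and [h], to which the FTC on [t0, +oo[ applies. *)
Lemma integral_itvy_is_derive (f g : R -> R) (t0 : R) :
  continuous f -> (forall t : R, is_derive t 1 g (f t)) ->
  exp_decay (fun t => `|f t|) t0 -> g t @[t --> +oo] --> 0 ->
  (\int[mu]_(t in `[t0, +oo[) (f t)%:E = (- g t0)%:E)%E.
Proof.
move=> cf hg [C [c [C0 c0 hf]]] g0.
pose h t := C * expR (- c * (t - t0)).
pose Hh t := - (C / c) * expR (- c * (t - t0)).
have h0 t : 0 <= h t by rewrite mulr_ge0 ?expR_ge0.
have fh0 t : t0 <= t -> 0 <= f t + h t.
  by move=> tt0; have := hf t tt0; rewrite ler_norml /h; lra.
have he (t : R) : is_derive t 1 (fun s => expR (- c * (s - t0))) (- c * expR (- c * (t - t0))).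
  exact: is_derive_expR_affine.
have hh (t : R) : is_derive t 1 h (- c * h t).
  apply: is_derive_eq (is_deriveZ C (he t)) _.
  by rewrite /h /GRing.scale /= mulrCA.
have hHh (t : R) : is_derive t 1 Hh (h t).
  apply: is_derive_eq (is_deriveZ (- (C / c)) (he t)) _.
  by rewrite /h /GRing.scale /=; field; exact: lt0r_neq0.
have ch : continuous h := continuous_is_derive hh.
have Hh0 : Hh t @[t --> +oo] --> 0.
  apply: (@exp_decay_cvg0 _ t0); exists (C / c), c; split => //; first by rewrite divr_ge0 // ltW.
  move=> t _; rewrite /Hh normrM normrN (ger0_norm (expR_ge0 _)) ger0_norm //.
  by rewrite divr_ge0 // ltW.
have cfh : continuous (fun t => f t + h t).
  by move=> t; apply: continuousD; [exact: cf | exact: ch].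
have hgHh (t : R) : is_derive t 1 (fun s => g s + Hh s) (f t + h t).
  exact: is_deriveD (hg t) (hHh t).
have gHh0 : g t + Hh t @[t --> +oo] --> 0 by rewrite -[0]addr0; exact: cvgD.
have I_fh := ge0_integral_itvy_is_derive fh0 cfh hgHh gHh0.
have I_h := ge0_integral_itvy_is_derive (fun t _ => h0 t) ch hHh Hh0.
have int_fh : mu.-integrable `[t0, +oo[ (fun t => (f t + h t)%:E).
  by apply: continuous_ge0_integrable_itvy => //; rewrite I_fh ltry.
have int_h : mu.-integrable `[t0, +oo[ (fun t => (h t)%:E).
  by apply: continuous_ge0_integrable_itvy => //; rewrite I_h ltry.
have -> : (fun t => (f t)%:E) = (fun t => (f t + h t)%:E - (h t)%:E)%E.
  by apply/funext => t; rewrite -EFinB addrK.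
by rewrite integralB // I_fh I_h -!EFinB; congr EFin; ring.
Qed.

End ExponentialDecay.

(* For [u = p + i s], [w = p' + i s'] and [z = a + i b]:
   [2 Re (w conj(u)) <= a |u|^2 - |w - z u|^2 / a]. *)
Lemma ler_shift_sqr (R : realFieldType) (a b p s p' s' : R) : a < 0 ->
  2 * (p' * p + s' * s) <=
  a * (p ^+ 2 + s ^+ 2) - a^-1 * ((p' - a * p + b * s) ^+ 2 + (s' - a * s - b * p) ^+ 2).
Proof.
move=> a0; rewrite -subr_ge0.
have -> : a * (p ^+ 2 + s ^+ 2) - a^-1 * ((p' - a * p + b * s) ^+ 2 + (s' - a * s - b * p) ^+ 2)
    - 2 * (p' * p + s' * s) =
    - a^-1 * ((p' + b * s) ^+ 2 + (s' - b * p) ^+ 2).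
  by field; exact: ltr0_neq0.
by rewrite mulr_ge0 ?addr_ge0 ?sqr_ge0 // oppr_ge0 invr_le0 ltW.
Qed.

Section GramMatrix.
Variables (R : realType) (m n : nat).
Implicit Types (U : 'M[R[i]]_(m, n)) (v : 'cV[R]_n).

Definition Re_mx (p q : nat) (U : 'M[R[i]]_(p, q)) : 'M[R]_(p, q) := map_mx (@complex.Re R) U.
Definition Im_mx (p q : nat) (U : 'M[R[i]]_(p, q)) : 'M[R]_(p, q) := map_mx (@complex.Im R) U.

(* [qform (gram U) v] is the squared hermitian norm of [U v]. *)
Definition gram U : 'M[R]_n := (Re_mx U)^T *m Re_mx U + (Im_mx U)^T *m Im_mx U.

Lemma qform_gram U v :
  qform (gram U) v = \sum_(i < m) ((Re_mx U *m v) i 0 ^+ 2 + (Im_mx U *m v) i 0 ^+ 2).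
Proof. by rewrite qformE bformD !bform_gram -big_split. Qed.

Lemma qform_gram_ge0 U v : 0 <= qform (gram U) v.
Proof. by rewrite qform_gram sumr_ge0 // => i _; rewrite addr_ge0 ?sqr_ge0. Qed.

Variable A : 'M[R]_n.
Local Notation AC := (map_mx (real_complex R) A).

Lemma Re_mx_mul_shift U z : Re_mx (U *m (AC - z%:M)) =
  Re_mx U *m A - complex.Re z *: Re_mx U + complex.Im z *: Im_mx U.
Proof.
apply/matrixP => i j; rewrite mulmxBr mul_mx_scalar !mxE raddfB raddf_sum /=.
rewrite -addrA; congr (_ + _).
  by apply: eq_bigr => k _; rewrite !mxE; case: (U i k) => a b /=; rewrite mulr0 subr0.
by case: z => a b; case: (U i j) => c d /=; ring.
Qed.

Lemma Im_mx_mul_shift U z : Im_mx (U *m (AC - z%:M)) =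
  Im_mx U *m A - complex.Re z *: Im_mx U - complex.Im z *: Re_mx U.
Proof.
apply/matrixP => i j; rewrite mulmxBr mul_mx_scalar !mxE raddfB raddf_sum /=.
rewrite -addrA; congr (_ + _).
  by apply: eq_bigr => k _; rewrite !mxE; case: (U i k) => a b /=; rewrite mulr0 add0r.
by case: z => a b; case: (U i j) => c d /=; ring.
Qed.

Lemma qform_lyapunov_gram_le U z v : complex.Re z < 0 ->
  qform (A^T *m gram U + gram U *m A) v <=
  complex.Re z * qform (gram U) v - (complex.Re z)^-1 * qform (gram (U *m (AC - z%:M))) v.
Proof.
move=> z0; rewrite qform_lyapunov /gram !bformD !bform_gram !qform_gram.
rewrite Re_mx_mul_shift Im_mx_mul_shift !mulmxDl !mulNmx -!scalemxAl -!mulmxA.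
move: (Re_mx U *m v) (Im_mx U *m v) (Re_mx U *m (A *m v)) (Im_mx U *m (A *m v)).
move=> pv sv pav sav; rewrite -!big_split mulr_sumr mulr_sumr -sumrB.
apply: ler_sum => i _; rewrite !mxE.
rewrite [leLHS](_ : _ = 2 * (pav i 0 * pv i 0 + sav i 0 * sv i 0)) /=; last by ring.
exact: ler_shift_sqr.
Qed.

End GramMatrix.

Section LinearFlowDecay.
Variables (R : realType) (n : nat) (A : 'M[R]_n) (x : R -> 'cV[R]_n) (t0 : R).
Hypothesis hx : forall t : R, is_derive t 1 x (A *m x t).
Local Notation AC := (map_mx (real_complex R) A).

Lemma exp_decay_gram_mul_shift m (U : 'M[R[i]]_(m, n)) z : complex.Re z < 0 ->
  exp_decay (fun t => qform (gram (U *m (AC - z%:M))) (x t)) t0 ->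
  exp_decay (fun t => qform (gram U) (x t)) t0.
Proof.
move=> z0; apply: (exp_decay_derive_le (a := complex.Re z) (k := - (complex.Re z)^-1)).
- exact: z0.
- by rewrite oppr_ge0 invr_le0 ltW.
- by move=> t; exact: is_derive_qform_flow.
- by move=> t; exact: qform_gram_ge0.
- by move=> t _; rewrite mulNr; exact: qform_lyapunov_gram_le.
Qed.

End LinearFlowDecay.

Section HurwitzDecay.
Variables (R : realType) (n : nat) (A : 'M[R]_n.+1) (x : R -> 'cV[R]_n.+1) (t0 : R).
Hypothesis hx : forall t : R, is_derive t 1 x (A *m x t).
Local Notation AC := (map_mx (real_complex R) A).

Lemma exp_decay_gram_horner_roots m (U : 'M[R[i]]_(m, n.+1)) (s : seq R[i]) :
  (forall z, z \in s -> complex.Re z < 0) ->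
  exp_decay (fun t => qform (gram (U *m horner_mx AC (\prod_(z <- s) ('X - z%:P)))) (x t)) t0 ->
  exp_decay (fun t => qform (gram U) (x t)) t0.
Proof.
elim: s U => [|z s IH] U hs; first by rewrite big_nil rmorph1 mulmx1.
rewrite big_cons rmorphM rmorphB /= horner_mx_X horner_mx_C mulmxA => /IH decay.
apply: (exp_decay_gram_mul_shift hx (hs z (mem_head _ _))); apply: decay => z' z's.
by apply: hs; rewrite in_cons z's orbT.
Qed.

(* Cayley-Hamilton: the product over all eigenvalues annihilates [A]. *)
Lemma exp_decay_gram_hurwitz m (U : 'M[R[i]]_(m, n.+1)) : hurwitz A ->
  exp_decay (fun t => qform (gram U) (x t)) t0.
Proof.
move=> hA; have [rs chiE] := closed_field_poly_normal (map_poly (real_complex R) (char_poly A)).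
have chi_monic : lead_coef (map_poly (real_complex R) (char_poly A)) = 1.
  by apply/monicP; rewrite map_monic char_poly_monic.
rewrite chi_monic scale1r in chiE.
apply: (exp_decay_gram_horner_roots (s := rs)).
  move=> z zrs; rewrite -ltcR complexRe; apply: hA.
  by rewrite chiE root_prod_XsubC.
rewrite -chiE map_char_poly Cayley_Hamilton mulmx0.
exists 0, 1; split => // t _; rewrite mul0r qform_gram big1 // => i _.
by rewrite !mxE !big1 ?expr0n ?addr0 // => j _; rewrite !mxE mul0r.
Qed.

End HurwitzDecay.

Lemma exp_decay_sqnorm_flow (R : realType) (n : nat) (A : 'M[R]_n) (x : R -> 'cV[R]_n)
    (t0 : R) :
  (forall t : R, is_derive t 1 x (A *m x t)) -> hurwitz A ->
  exp_decay (fun t => \sum_(i < n) x t i 0 ^+ 2) t0.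
Proof.
case: n A x => [|n] A x hx hA.
  by exists 0, 1; split => // t _; rewrite big_ord0 mul0r.
have Re1 : Re_mx (1%:M : 'M[R[i]]_n.+1) = 1%:M.
  by apply/matrixP => i j; rewrite !mxE; case: eqP.
have Im1 : Im_mx (1%:M : 'M[R[i]]_n.+1) = 0.
  by apply/matrixP => i j; rewrite !mxE; case: eqP.
have := exp_decay_gram_hurwitz t0 hx 1%:M hA.
suff -> : (fun t => qform (gram (1%:M : 'M[R[i]]_n.+1)) (x t)) =
          (fun t => \sum_(i < n.+1) x t i 0 ^+ 2) by [].
apply/funext => t; rewrite qform_gram Re1 Im1; apply: eq_bigr => i _.
by rewrite mul1mx mul0mx mxE expr0n addr0.
Qed.

Lemma exp_decay_qform (R : realType) (n : nat) (M : 'M[R]_n) (v : R -> 'cV[R]_n) (t0 : R) :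
  exp_decay (fun t => \sum_(k < n) v t k 0 ^+ 2) t0 ->
  exp_decay (fun t => `|qform M (v t)|) t0.
Proof.
move=> [C [c [C0 c0 hv]]]; pose K := \sum_(i < n) \sum_(j < n) `|M i j|.
have K0 : 0 <= K by apply: sumr_ge0 => i _; apply: sumr_ge0.
exists (K * C), c; split; rewrite ?mulr_ge0 // => t tt0.
by rewrite (le_trans (qform_abs_le M (v t))) // -mulrA ler_wpM2l ?hv.
Qed.

Lemma J_eq_lyapunov (R : realType) (n : nat) (A Q Ys Y : 'M[R]_n) (x : R -> 'cV[R]_n) (t0 : R) :
  hurwitz A -> (forall t : R, is_derive t 1 x (A *m x t)) ->
  A^T *m Ys + Ys *m A + Q = 0 -> J_eq A Q Y x t0 = (qform Ys (x t0))%:E.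
Proof.
move=> hA hx hYs; have sq := exp_decay_sqnorm_flow t0 hx hA.
have QE : Q = - (A^T *m Ys + Ys *m A) by apply/eqP; rewrite -addr_eq0 addrC hYs.
have hg (t : R) : is_derive t 1 (fun s => qform (Y - Ys) (x s)) (qform (A^T *m Y + Y *m A + Q) (x t)).
  by rewrite QE opprD addrACA -mulmxBr -mulmxBl; exact: is_derive_qform_flow.
have cf : continuous (fun t => qform (A^T *m Y + Y *m A + Q) (x t)).
  exact: continuous_is_derive (fun t => is_derive_qform_flow _ (hx t)).
rewrite /J_eq (integral_itvy_is_derive cf hg (exp_decay_qform _ sq)); last first.
  exact: exp_decay_cvg0 (exp_decay_qform _ sq).
by rewrite -EFinD !qformE bformD bformN opprD opprK addNKr.
Qed.

Theorem theorem4 (R : realType) (n : nat) (A Q Ystar : 'M[R]_n)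
  (x : R -> 'cV[R]_n) (t0 : R) (x0 : 'cV[R]_n) :
  hurwitz A -> psd Q ->
  x t0 = x0 -> (forall t : R, is_derive t 1 x (A *m x t)) ->
  A^T *m Ystar + Ystar *m A + Q = 0 ->
  (forall Y : 'M[R]_n, psd Y -> (J_eq A Q Y x t0 >= (qform Ystar x0)%:E)%E) /\
  (t0 = 0 -> forall Y : 'M[R]_n, J_eq A Q Y x t0 = (qform Ystar x0)%:E).
Proof.
move=> hA _ <- hx hYs.
by split=> [Y _|_ Y]; rewrite (J_eq_lyapunov Y t0 hA hx hYs).
Qed.
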